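(* On every nondegenerate TNECP instance (and for every choice of $j^\star\in[n]$), the tropical Lemke--Howson algorithm terminates after a finite number of iterations with a fully labeled tropical basis $B$ distinct from $[n]\times\{\text{blue}\}$.
   Context: $\mathbb{T}=\mathbb{R}\cup\{-\infty\}$ with $\oplus=\max$, $\odot=+$. A TNECP instance is $M\in\mathbb{T}^{n\times n}$, $q\in\mathbb{T}^n$ with no all-$(-\infty)$ column in $M$ and no $-\infty$ entry in $q$; it is nondegenerate if for each $j\in[n]$ the minimum $\min_k(q_k-M_{kj})$ is attained by exactly one $k$ (convention $a-(-\infty)=+\infty$). Write $w\oplus M\odot z=q$ as $A\odot x=q$ with columns indexed by $[n]\uplus[n]:=([n]\times\{\text{blue}\})\cup([n]\times\{\text{red}\})$: column $(i,\text{blue})$ has $0$ in row $i$ and $-\infty$ elsewhere; column $(j,\text{red})$ is column $j$ of $M$. A tropical basis of $A\odot x=b$ ($A\in\mathbb{T}^{n\times d}$) is a set $B$ of $n$ column indices with a bijection $\phi:[n]\to B$ such that for each $i$, $b_i-A_{i\phi(i)}\in\mathbb{T}$ is minimal among $b_k-A_{k\phi(i)}$, $k\in[n]$. The label of $(k,c)$ is $k$; $(k,\text{blue})$ and $(k,\text{red})$ are twins; a basis is fully labeled if every label of $[n]$ appears in it. Tropical Lemke--Howson algorithm with parameter $j^\star\in[n]$: $B\leftarrow[n]\times\{\text{blue}\}$, $\gamma\leftarrow(j^\star,\text{red})$; loop: $B'\leftarrow$ the unique tropical basis contained in $B\cup\{\gamma\}$ and different from $B$; $\gamma\leftarrow$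 twin of the unique element of $B\setminus B'$; $B\leftarrow B'$; if $B$ is fully labeled, stop. *)

(* Tropical semiring T = R u {-oo}, encoded as [option R]
   with [None] = -oo and [Some x] = x. *)
From mathcomp Require Import all_boot all_order all_algebra.
Set Implicit Arguments. Unset Strict Implicit. Unset Printing Implicit Defensive.
Import Order.TTheory GRing.Theory Num.Theory.
Local Open Scope ring_scope.

Notation blue := false.
Notation red := true.

Notation colidx n := ('I_n * bool)%type.

(* The matrix A of the system  w (+) M (.) z = q  written as  A (.) x = q:
   column (i,blue) has 0 in row i and -oo elsewhere; column (j,red) is
   column j of M. *)
Definition tnecpA (R : realFieldType) (n : nat) (M : 'M[option R]_n)
    (k : 'I_n) (c : colidx n) : option R :=
  let: (j, col) := c in
  if col then M k j else (if k == j then Some 0 else None).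

(* [attains_min A b i c]: b_i - A_{i c} is finite (i.e. A_{i c} <> -oo)
   and is minimal among all b_k - A_{k c}, k in [n]
   (with the convention a - (-oo) = +oo). *)
Definition attains_min (R : realFieldType) (n : nat) (C : Type)
    (A : 'I_n -> C -> option R) (b : 'I_n -> R) (i : 'I_n) (c : C) : Prop :=
  exists a, A i c = Some a /\
    (forall (k : 'I_n) (a' : R), A k c = Some a' -> b i - a <= b k - a').

Definition trop_basis (R : realFieldType) (n : nat) (C : finType)
    (A : 'I_n -> C -> option R) (b : 'I_n -> R) (B : {set C}) : Prop :=
  #|B| = n /\
  exists phi : 'I_n -> C,
    [/\ injective phi, phi @: setT = B & forall i, attains_min A b i (phi i)].

Definition tnecp_nondegenerate (R : realFieldType) (n : nat) (M : 'M[option R]_n)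
    (q : 'I_n -> R) : Prop :=
  forall j : 'I_n, exists k : 'I_n,
    attains_min (fun k j => M k j) q k j /\
    (forall k', attains_min (fun k j => M k j) q k' j -> k' = k).

Definition no_neginf_column (R : realFieldType) (n : nat) (M : 'M[option R]_n)
  : Prop := forall j : 'I_n, exists k : 'I_n, M k j <> None.

Definition label n (c : colidx n) : 'I_n := c.1.
Definition twin n (c : colidx n) : colidx n := (c.1, ~~ c.2).
Definition fully_labeled n (B : {set colidx n}) : Prop :=
  forall l : 'I_n, exists c, c \in B /\ label c = l.

Definition blue_basis n : {set colidx n} := [set c | c.2 == blue].

Definition LH_step (R : realFieldType) (n : nat) (M : 'M[option R]_n)
    (q : 'I_n -> R) (B : {set colidx n}) (g : colidx n)
    (B' : {set colidx n}) (g' : colidx n) : Prop :=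
  [/\ trop_basis (tnecpA M) q B',
      B' \subset g |: B,
      B' != B,
      (forall B'', trop_basis (tnecpA M) q B'' -> B'' \subset g |: B ->
                   B'' != B -> B'' = B')
    & exists e, B :\: B' = [set e] /\ g' = twin e].

Definition LH_terminates_with (R : realFieldType) (n : nat)
    (M : 'M[option R]_n) (q : 'I_n -> R) (jstar : 'I_n) (T : nat)
    (Bs : nat -> {set colidx n}) (gs : nat -> colidx n) : Prop :=
  [/\ Bs 0%N = blue_basis n /\ gs 0%N = (jstar, red),
      (0 < T)%N,
      (forall t, (t < T)%N -> LH_step M q (Bs t) (gs t) (Bs t.+1) (gs t.+1)),
      (forall t, (0 < t < T)%N -> ~ fully_labeled (Bs t))
    & fully_labeled (Bs T)].

From mathcomp Require Import all_boot all_order all_algebra.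
From mathcomp Require Import zify.
Set Implicit Arguments.
Unset Strict Implicit.
Unset Printing Implicit Defensive.

(* Nondegeneracy gives every column c a unique row r c attaining its minimum, so
   the tropical bases are exactly the transversals of r (sets of columns on
   which r is a bijection onto [n]), and an iteration of the algorithm is a
   pivot: the entering column replaces the basis column lying in its row.
   Along the run, B together with the entering column carries every label, and
   only label j* twice; the run stops exactly when the leaving column has
   label j*.  A pivot is undone by pivoting back in the leaving column, so
   the step map is injective on such states and reversing the entering column
   turns a run into a run.  Injectivity in a finite state space forces the run
   to come back to its fully labeled start unless it stops earlier.  If it
   stopped at the blue basis, its last state would be the reversal of its
   first one, the whole run would be a palindrome, and its middle state would
   be the reversal of itself or of its successor, which is impossible. *)

Section Transversal.
Variables (n : nat) (C : finType) (r : C -> 'I_n).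

Definition transversal (B : {set C}) : Prop :=
  (forall k, exists2 c, c \in B & r c = k) /\ {in B &, injective r}.

Definition pivot (B : {set C}) (g : C) : C :=
  odflt g [pick c in B | r c == r g].

Definition pivot_step (B : {set C}) (g : C) : {set C} := g |: (B :\ pivot B g).

Lemma card_transversal B : transversal B -> #|B| = n.
Proof.
case=> onto inj; rewrite -(card_in_imset inj).
have -> : r @: B = setT.
  by apply/setP=> k; rewrite inE; have [c cB <-] := onto k; apply: imset_f.
by rewrite cardsT card_ord.
Qed.

Lemma pivotP B g : transversal B -> pivot B g \in B /\ r (pivot B g) = r g.
Proof.
case=> onto _; rewrite /pivot; case: pickP => [c /andP[cB /eqP rc] | none] //=.
by have [c cB rc] := onto (r g); move: (none c); rewrite /= cB rc eqxx.
Qed.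

Lemma pivot_eq B g c : transversal B -> c \in B -> r c = r g -> pivot B g = c.
Proof.
move=> tB cB rc; have [pB rp] := pivotP g tB.
by apply: (proj2 tB) pB cB _; rewrite rp rc.
Qed.

Section PivotStep.
Variables (B : {set C}) (g : C).
Hypotheses (tB : transversal B) (gB : g \notin B).

Lemma mem_pivot_step c :
  (c \in pivot_step B g) = (c \in g |: B) && (c != pivot B g).
Proof.
have [pB _] := pivotP g tB; rewrite !inE.
case: (eqVneq c (pivot B g)) => [->|_]; last by rewrite andbT.
by rewrite andbF orbF; apply: contraNF gB => /eqP <-.
Qed.

Lemma transversal_pivot_step : transversal (pivot_step B g).
Proof.
have [onto inj] := tB; have [pB rp] := pivotP g tB.
split=> [k|c c'].
  have [c cB <-] := onto k; case: (eqVneq c (pivot B g)) => [->|cp].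
    by exists g; rewrite ?setU11.
  by exists c; rewrite ?mem_pivot_step ?inE ?cB ?cp ?orbT.
rewrite /pivot_step !inE.
move=> /orP[/eqP-> | /andP[cp cB]] /orP[/eqP-> | /andP[c'p c'B]] // rcc'.
- by move: c'p; rewrite -(inj _ _ pB c'B) ?eqxx // rp.
- by move: cp; rewrite (inj _ _ cB pB) ?eqxx // rp.
- exact: inj.
Qed.

Lemma pivot_step_uniq B' :
  transversal B' -> B' \subset g |: B -> B' != B -> B' = pivot_step B g.
Proof.
move=> tB' sB' B'B; have [pB rp] := pivotP g tB.
have gB' : g \in B'.
  apply: contraNT B'B => gB'; rewrite eqEcard (card_transversal tB).
  rewrite (card_transversal tB') leqnn andbT; apply/subsetP=> c cB'.
  by case/setU1P: (subsetP sB' c cB') => // cg; rewrite -cg cB' in gB'.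
have pB' : pivot B g \notin B'.
  apply: contra gB => pB'; have -> // : g = pivot B g.
  exact: (proj2 tB') gB' pB' (esym rp).
apply/eqP; rewrite eqEcard (card_transversal tB').
rewrite (card_transversal transversal_pivot_step) leqnn andbT.
apply/subsetP=> c cB'; rewrite mem_pivot_step (subsetP sB') //=.
by apply: contraNneq pB' => <-.
Qed.

Lemma setD_pivot_step : B :\: pivot_step B g = [set pivot B g].
Proof.
have [pB _] := pivotP g tB; apply/setP=> c.
rewrite in_setD mem_pivot_step !inE negb_and negbK.
case: (eqVneq c (pivot B g)) => [->|_]; first by rewrite orbT pB.
by case: (c \in B); rewrite ?orbT ?orbF ?andbF.
Qed.

Lemma pivot_pivot_step : pivot (pivot_step B g) (pivot B g) = g.
Proof.
have [_ rp] := pivotP g tB.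
by apply: pivot_eq; rewrite ?rp ?setU11 //; apply: transversal_pivot_step.
Qed.

Lemma pivot_stepK : pivot_step (pivot_step B g) (pivot B g) = B.
Proof.
have [pB _] := pivotP g tB; apply/setP=> c.
rewrite [in LHS]/pivot_step pivot_pivot_step !inE.
case: (eqVneq c (pivot B g)) => [->|] //=.
by case: (eqVneq c g) => [->|]; rewrite ?(negbTE gB).
Qed.

End PivotStep.
End Transversal.

Lemma trop_basisE (R : realFieldType) (n : nat) (C : finType)
    (A : 'I_n -> C -> option R) (b : 'I_n -> R) (r : C -> 'I_n) :
  (forall k c, attains_min A b k c <-> k = r c) ->
  forall B, trop_basis A b B <-> transversal r B.
Proof.
move=> minE B; split=> [[_ [phi [_ <- phi_min]]] | tB].
  have r_phi i : r (phi i) = i by apply/esym/minE.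
  split=> [k | _ _ /imsetP[i _ ->] /imsetP[i' _ ->]]; last first.
    by rewrite !r_phi => ->.
  by exists (phi k); rewrite ?imset_f ?inE.
split; first exact: card_transversal tB.
have [phi phiB r_phi] := fin_all_exists2 (proj1 tB).
exists phi; split.
- by move=> i i' eq_phi; rewrite -(r_phi i) -(r_phi i') eq_phi.
- apply/setP=> c; apply/imsetP/idP => [[i _ ->] // | cB].
  by exists (r c); rewrite ?inE //; apply: (proj2 tB); rewrite ?phiB ?r_phi.
- by move=> i; apply/minE; rewrite r_phi.
Qed.

Lemma attains_min_blue (R : realFieldType) (n : nat) (M : 'M[option R]_n)
    (q : 'I_n -> R) k i :
  attains_min (tnecpA M) q k (i, blue) <-> k = i.
Proof.
rewrite /attains_min /tnecpA; split=> [[a []] | ->]; first by case: eqP.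
by exists 0%R; rewrite eqxx; split=> // k' a'; case: eqP => // -> [<-].
Qed.

Lemma tnecp_row_map (R : realFieldType) (n : nat) (M : 'M[option R]_n)
    (q : 'I_n -> R) :
  tnecp_nondegenerate M q ->
  exists r : colidx n -> 'I_n,
    (forall k c, attains_min (tnecpA M) q k c <-> k = r c) /\
    (forall i, r (i, blue) = i).
Proof.
move=> nondeg.
have row c : exists k, forall k', attains_min (tnecpA M) q k' c <-> k' = k.
  case: c => i [|]; last by exists i => k'; apply: attains_min_blue.
  have [k [k_min k_uniq]] := nondeg i.
  by exists k => k'; split=> [/k_uniq | ->].
have [r rE] := fin_all_exists row; exists r; split=> // i.
by apply/esym/(rE (i, blue))/attains_min_blue.
Qed.

Lemma pigeonhole_nat (T : finType) (u : nat -> T) :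
  exists i k, i < k <= #|T| /\ u i = u k.
Proof.
pose v (t : 'I_#|T|.+1) := u t.
have /injectivePn[x [y xy vxy]] : ~~ injectiveb v.
  by apply/injectiveP => /leq_card; rewrite card_ord ltnn.
case: (ltngtP x y) => [lt | gt | /val_inj eq]; last by rewrite eq eqxx in xy.
- by exists x, y; rewrite lt -ltnS ltn_ord.
- by exists y, x; rewrite gt -ltnS ltn_ord.
Qed.

Section InjectiveIteration.
Variables (S : Type) (f : S -> S) (P : S -> Prop).
Hypothesis f_injP : forall s s', P s -> P s' -> f s = f s' -> s = s'.

Lemma iter_injP m x y :
  (forall t, t < m -> P (iter t f x) /\ P (iter t f y)) ->
  iter m f x = iter m f y -> x = y.
Proof.
elim: m x y => // m IH x y Pxy; rewrite !iterSr => /IH eq_f.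
apply: f_injP; [exact: (Pxy 0 _).1 | exact: (Pxy 0 _).2 |].
by apply: eq_f => t tm; rewrite -!iterSr; apply: Pxy.
Qed.

End InjectiveIteration.

Lemma iter_return (S : finType) (f : S -> S) (P : S -> Prop) x :
  (forall s s', P s -> P s' -> f s = f s' -> s = s') ->
  (forall t, t < #|S| -> P (iter t f x)) ->
  exists2 d, 0 < d <= #|S| & iter d f x = x.
Proof.
move=> f_injP Px.
have [i [k [/andP[ik kS] eq_ik]]] := pigeonhole_nat (fun t => iter t f x).
have lt_card t : t < k -> t < #|S| by move=> tk; apply: leq_trans tk kS.
exists (k - i); first by rewrite subn_gt0 ik (leq_trans (leq_subr _ _) kS).
apply/esym/(iter_injP f_injP (m := i)); last by rewrite -iterD subnKC // ltnW.
move=> t ti; rewrite -iterD; split; apply/Px/lt_card.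
  exact: ltn_trans ik.
by rewrite addnC -ltn_subRL subKn // ltnW.
Qed.

Section ReversibleIteration.
Variables (S : Type) (f rho : S -> S) (P : S -> Prop).
Hypotheses (rhoK : involutive rho)
  (f_rev : forall s, P s -> f (rho (f s)) = rho s).

Lemma reversible_injP s s' : P s -> P s' -> f s = f s' -> s = s'.
Proof.
by move=> Ps Ps' eq_f; apply: (can_inj rhoK); rewrite -f_rev // eq_f f_rev.
Qed.

Lemma iter_palindrome x T :
  (forall t, t < T -> P (iter t f x)) -> rho (iter T f x) = x ->
  forall t, t <= T -> iter t f x = rho (iter (T - t) f x).
Proof.
move=> Px ret; elim=> [_ | t IH tT]; first by rewrite subn0 ret.
rewrite iterS IH ?(ltnW tT) // -(subnSK tT) iterS f_rev //; apply: Px; lia.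
Qed.

Lemma iter_reverse_neq_start x T :
  (forall s, P s -> rho s <> s) -> (forall s, P s -> rho (f s) <> s) ->
  0 < T -> (forall t, t < T -> P (iter t f x)) -> rho (iter T f x) <> x.
Proof.
move=> rho_neq rho_f_neq T_gt0 Px ret; set m := T./2.
have T_eq := odd_double_half T; rewrite -addnn -/m in T_eq.
have mid : iter m f x = rho (iter (T - m) f x).
  by apply: (iter_palindrome Px ret); lia.
have Pm : P (iter m f x) by apply: Px; lia.
case: (odd T) T_eq => /= T_eq.
- rewrite (_ : T - m = m.+1) ?iterS in mid; last by lia.
  exact: rho_f_neq Pm (esym mid).
- rewrite (_ : T - m = m) in mid; last by lia.
  exact: rho_neq Pm (esym mid).
Qed.

End ReversibleIteration.

Lemma twinK n : involutive (@twin n).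
Proof. by case=> l b; rewrite /twin /= negbK. Qed.

Lemma twin_neq n (c : colidx n) : twin c != c.
Proof. by case: c => l []; rewrite /twin xpair_eqE eqxx. Qed.

Lemma label_twin n (c : colidx n) : label (twin c) = label c.
Proof. by []. Qed.

Lemma twin_of_label n (c c' : colidx n) :
  label c' = label c -> c' != c -> c' = twin c.
Proof. by case: c c' => l [] [l' []] /= ->; rewrite /twin ?eqxx. Qed.

Definition fully_labeledb n (B : {set colidx n}) : bool :=
  [forall l, [exists c in B, label c == l]].

Lemma fully_labeledP n (B : {set colidx n}) :
  reflect (fully_labeled B) (fully_labeledb B).
Proof.
apply: (iffP forallP) => [full l | full l].
  by have /existsP[c /andP[cB /eqP cl]] := full l; exists c.
by have [c [cB cl]] := full l; apply/existsP; exists c; rewrite cB cl /=.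
Qed.

Lemma fully_labeled_blue n : fully_labeled (blue_basis n).
Proof. by move=> l; exists (l, blue); rewrite inE. Qed.

Section LemkeHowson.
Variables (n : nat) (r : colidx n -> 'I_n) (j : 'I_n).
Hypothesis r_blue : forall i, r (i, blue) = i.

Local Notation state := ({set colidx n} * colidx n)%type.

Definition almost_labeled (S : {set colidx n}) : Prop :=
  forall c, ((c \in S) || (twin c \in S)) /\
            ((c \in S) && (twin c \in S) = (label c == j)).

Definition lh_step (s : state) : state :=
  (pivot_step r s.1 s.2, twin (pivot r s.1 s.2)).

Definition lh_reverse (s : state) : state := (s.1, twin s.2).

Definition lh_inv (s : state) : Prop :=
  [/\ transversal r s.1, s.2 \notin s.1 & almost_labeled (s.2 |: s.1)].

Definition lh_run (t : nat) : state := iter t lh_step (blue_basis n, (j, red)).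

Lemma lh_runS t : lh_run t.+1 = lh_step (lh_run t).
Proof. exact: iterS. Qed.

Lemma lh_reverseK : involutive lh_reverse.
Proof. by case=> B g; rewrite /lh_reverse /= twinK. Qed.

Lemma lh_reverse_neq s : lh_reverse s <> s.
Proof. by case: s => B g [] /eqP; rewrite (negbTE (twin_neq g)). Qed.

Lemma transversal_blue : transversal r (blue_basis n).
Proof.
split=> [k | [l b] [l' b']]; first by exists (k, blue); rewrite ?inE.
by rewrite !inE /= => /eqP-> /eqP->; rewrite !r_blue => ->.
Qed.

Lemma lh_inv0 : lh_inv (blue_basis n, (j, red)).
Proof.
split=> /=; [exact: transversal_blue | by rewrite inE |].
by case=> l []; rewrite /twin !inE !xpair_eqE; case: (l == j).
Qed.

Lemma lh_step_reversible s :
  lh_inv s -> lh_step (lh_reverse (lh_step s)) = lh_reverse s.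
Proof.
case: s => B g [tB gB _]; rewrite /lh_step /lh_reverse /= twinK.
by rewrite pivot_pivot_step // pivot_stepK.
Qed.

Lemma lh_reverse_step_neq s : lh_inv s -> lh_reverse (lh_step s) <> s.
Proof. by case: s => B g [_ gB _] [eqB _]; rewrite -eqB setU11 in gB. Qed.

Lemma fully_labeled_lh_step s :
  lh_inv s -> fully_labeled (lh_step s).1 <-> label (pivot r s.1 s.2) = j.
Proof.
case: s => B g [/= tB gB almost] /=; have [eB _] := pivotP g tB.
set e := pivot r B g; have eS : e \in g |: B by rewrite inE eB orbT.
have twin_eS : (twin e \in g |: B) = (label e == j).
  by rewrite -(almost e).2 eS.
split=> [full | ej l].
  have [c [cB' cl]] := full (label e); move: cB'.
  rewrite mem_pivot_step // => /andP[cS ce].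
  by apply/eqP; rewrite -twin_eS -(twin_of_label cl ce).
case: (eqVneq l (label e)) => [-> | le].
  by exists (twin e); rewrite mem_pivot_step // twin_eS ej eqxx twin_neq.
have [c cS cl] : exists2 c, c \in g |: B & label c = l.
  case/orP: (almost (l, blue)).1; first by exists (l, blue).
  by exists (twin (l, blue)).
exists c; rewrite mem_pivot_step // cS; split=> //.
by apply: contraNneq le => ce; rewrite -cl ce.
Qed.

Lemma lh_inv_step s :
  lh_inv s -> label (pivot r s.1 s.2) != j -> lh_inv (lh_step s).
Proof.
case: s => B g [/= tB gB almost] /= ej; have [eB _] := pivotP g tB.
set e := pivot r B g; have eS : e \in g |: B by rewrite inE eB orbT.
have twin_eS : twin e \notin g |: B.
  by move: (almost e).2; rewrite eS (negbTE ej) /= => ->.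
set S' := twin e |: pivot_step r B g.
have e_S' : e \notin S'.
  by rewrite in_setU1 mem_pivot_step // eqxx andbF orbF eq_sym twin_neq.
have twin_e_S' : twin e \in S' by rewrite setU11.
have memS' c : c != e -> c != twin e -> (c \in S') = (c \in g |: B).
  by move=> ce cte; rewrite in_setU1 (negbTE cte) mem_pivot_step // ce andbT.
split=> /=; first exact: transversal_pivot_step.
  by rewrite mem_pivot_step // negb_and twin_eS.
move=> c; case: (eqVneq c e) => [-> | ce].
  by rewrite (negbTE e_S') twin_e_S' (negbTE ej).
case: (eqVneq c (twin e)) => [-> | cte].
  by rewrite twinK twin_e_S' (negbTE e_S') label_twin (negbTE ej).
have tce : twin c != e by apply: contraNneq cte => <-; rewrite twinK.
have tcte : twin c != twin e by rewrite (inj_eq (can_inj (@twinK n))).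
by rewrite !memS'.
Qed.

Lemma lh_reverse_last s :
  lh_inv s -> label (pivot r s.1 s.2) = j -> (lh_step s).1 = blue_basis n ->
  lh_reverse (lh_step s) = (blue_basis n, (j, red)).
Proof.
case: s => B g [tB gB _] /= ej blueB'; rewrite /lh_reverse /= twinK blueB'.
have : pivot r B g \notin blue_basis n.
  by rewrite -blueB' mem_pivot_step // eqxx andbF.
by rewrite inE; case: (pivot r B g) ej => l [] //= ->.
Qed.

Lemma LH_step_lh_step (R : realFieldType) (M : 'M[option R]_n)
    (q : 'I_n -> R) s :
  (forall B, trop_basis (tnecpA M) q B <-> transversal r B) ->
  transversal r s.1 -> s.2 \notin s.1 ->
  LH_step M q s.1 s.2 (lh_step s).1 (lh_step s).2.
Proof.
case: s => B g basisE /= tB gB; split.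
- exact/basisE/transversal_pivot_step.
- by apply/subsetP=> c; rewrite mem_pivot_step // => /andP[].
- by apply: contraNneq gB => <-; rewrite setU11.
- by move=> B' /basisE tB'; apply: pivot_step_uniq.
- by exists (pivot r B g); rewrite setD_pivot_step.
Qed.

Section Run.
Variable T : nat.
Hypothesis not_full_before :
  forall t, 0 < t < T -> ~ fully_labeled (lh_run t).1.

Lemma lh_inv_run t : t < T -> lh_inv (lh_run t).
Proof.
elim: t => [_ | t IH tT]; first exact: lh_inv0.
have inv_t := IH (ltnW tT); rewrite lh_runS; apply: (lh_inv_step inv_t).
apply/eqP => ej; apply: (not_full_before (t := t.+1)); first by rewrite tT.
by rewrite lh_runS; apply/(fully_labeled_lh_step inv_t).
Qed.

Lemma transversal_lh_run t : t <= T -> transversal r (lh_run t).1.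
Proof.
case: t => [_ | t tT]; first exact: transversal_blue.
have [tB gB _] := lh_inv_run tT.
by rewrite lh_runS; apply: transversal_pivot_step.
Qed.

Hypotheses (T_gt0 : 0 < T) (full_T : fully_labeled (lh_run T).1).

Lemma lh_run_last_not_blue : (lh_run T).1 != blue_basis n.
Proof.
apply/eqP => blue_T.
have ret : lh_reverse (lh_run T) = (blue_basis n, (j, red)).
  have [t T_eq] : exists t, T = t.+1 by exists T.-1; rewrite prednK.
  have inv_t : lh_inv (lh_run t) by apply: lh_inv_run; rewrite T_eq.
  have := full_T; rewrite T_eq lh_runS in blue_T *.
  move=> /(fully_labeled_lh_step inv_t) ej.
  exact: lh_reverse_last inv_t ej blue_T.
exact: (iter_reverse_neq_start lh_step_reversible
  (fun s _ => @lh_reverse_neq s) lh_reverse_step_neq T_gt0 lh_inv_run ret).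
Qed.

Lemma lh_run_terminates_with (R : realFieldType) (M : 'M[option R]_n)
    (q : 'I_n -> R) :
  (forall B, trop_basis (tnecpA M) q B <-> transversal r B) ->
  LH_terminates_with M q j T (fun t => (lh_run t).1) (fun t => (lh_run t).2).
Proof.
move=> basisE; split=> // t tT; rewrite lh_runS.
by have [tB gB _] := lh_inv_run tT; apply: LH_step_lh_step.
Qed.

End Run.

Lemma lh_run_terminates : exists t, (0 < t) && fully_labeledb (lh_run t).1.
Proof.
pose N := #|{: state}|.
suff /existsP[t /andP[t_gt0 full_t]] :
    [exists t : 'I_N.+1, (0 < t) && fully_labeledb (lh_run t).1].
  by exists t; rewrite t_gt0.
apply: contraT => /existsPn none.
have not_full t : 0 < t < N.+1 -> ~ fully_labeled (lh_run t).1.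
  move=> /andP[t_gt0 tN] /fully_labeledP full_t.
  by have := none (Ordinal tN); rewrite t_gt0 full_t.
have [|d /andP[d_gt0 dN] ret] := iter_return (x := (blue_basis n, (j, red)))
  (reversible_injP lh_reverseK lh_step_reversible).
  by move=> t tN; apply: (lh_inv_run not_full (ltnW tN)).
have d_range : 0 < d < N.+1 by rewrite d_gt0 ltnS.
by case: (not_full d d_range); rewrite /lh_run ret; apply: fully_labeled_blue.
Qed.

Lemma lh_first_exit : exists T, [/\ 0 < T, fully_labeled (lh_run T).1 &
  forall t, 0 < t < T -> ~ fully_labeled (lh_run t).1].
Proof.
have [T /andP[T_gt0 /fully_labeledP full_T] T_min] :=
  ex_minnP lh_run_terminates.
exists T; split=> // t /andP[t_gt0 tT] /fully_labeledP full_t.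
by have := T_min t; rewrite t_gt0 full_t leqNgt tT => /(_ isT).
Qed.

End LemkeHowson.

Unset Implicit Arguments.

Theorem proposition5p1 (R : realFieldType) (n : nat) (M : 'M[option R]_n)
    (q : 'I_n -> R) :
  no_neginf_column M -> tnecp_nondegenerate M q ->
  forall jstar : 'I_n,
  exists (T : nat) (Bs : nat -> {set colidx n}) (gs : nat -> colidx n),
    LH_terminates_with M q jstar T Bs gs /\
    trop_basis (tnecpA M) q (Bs T) /\
    fully_labeled (Bs T) /\ Bs T != blue_basis n.
Proof.
(* Nondegeneracy already forces a finite entry in every column of M. *)
move=> _ nondeg jstar.
have [r [rowE r_blue]] := tnecp_row_map nondeg.
have basisE := trop_basisE rowE.
have [T [T_gt0 full_T first_T]] := lh_first_exit jstar r_blue.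
exists T, (fun t => (lh_run r jstar t).1), (fun t => (lh_run r jstar t).2).
split; first exact: lh_run_terminates_with.
split; first exact/basisE/(transversal_lh_run r_blue first_T).
by split; last exact: (lh_run_last_not_blue r_blue first_T T_gt0 full_T).
Qed.
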